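(* Let $f_1,f_2:\mathbb R^d\to\mathbb R$ be convex with $\nabla f_i$ globally Lipschitz continuous with modulus $L_i>0$ ($i=1,2$), let $f_3:\mathbb R^d\to\mathbb R\cup\{+\infty\}$ be proper and lower semicontinuous, and assume $\varphi:=f_1+f_2+f_3$ has a nonempty set of minimizers. Let $\alpha,\gamma,\lambda>0$ and let $(x_1^k,x_2^k,x_3^k)_k$, $(z_1^k,z_2^k)_k$ be sequences generated by the relaxed Ryu splitting method. Writing $\Delta x_i^k=x_i^{k+1}-x_i^k$ and $\Delta g_i^k=\nabla f_i(x_i^{k+1})-\nabla f_i(x_i^k)$ for $i=1,2$, for all $k\ge0$: $$\sum_{i=1}^2\Big[f_i(x_i^k)-f_i(x_i^{k+1})-\langle\nabla f_i(x_i^{k+1}),x_3^k-x_i^{k+1}\rangle+\langle\nabla f_i(x_i^k),x_3^k-x_i^k\rangle\Big]$$ $$\ge\sum_{i=1}^2\Big(\frac{1}{2L_i}-\frac{\gamma}{\lambda}\Big)\|\Delta g_i^k\|^2-\frac{1}{\lambda}\langle\Delta g_1^k,\Delta x_1^k\rangle-\frac{\alpha}{\lambda}\langle\Delta g_2^k,\Delta x_2^k\rangle+\frac{\alpha}{\lambda}\langle\Delta g_2^k,\Delta x_1^k\rangle.$$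
   Context: For $h:\mathbb R^d\to\mathbb R\cup\{+\infty\}$ and $\gamma>0$, $\mathrm{prox}_{\gamma h}(z):=\operatorname{argmin}_{y}\{h(y)+\frac{1}{2\gamma}\|y-z\|^2\}$. The relaxed Ryu splitting method: given $z_1^0,z_2^0\in\mathbb R^d$, for $k\ge0$, $x_1^k=\mathrm{prox}_{\gamma f_1}(z_1^k)$, $x_2^k=\mathrm{prox}_{\frac{\gamma}{\alpha}f_2}(\frac{z_2^k}{\alpha}+x_1^k)$, $x_3^k\in\mathrm{prox}_{\gamma f_3}(x_1^k-z_1^k+x_2^k-z_2^k)$, $z_1^{k+1}=z_1^k+\lambda(x_3^k-x_1^k)$, $z_2^{k+1}=z_2^k+\lambda(x_3^k-x_2^k)$. *)

From HB Require Import structures.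
From mathcomp Require Import all_boot all_order all_algebra.
From mathcomp Require Import all_classical all_reals all_analysis.
Set Implicit Arguments. Unset Strict Implicit. Unset Printing Implicit Defensive.
Import Order.TTheory GRing.Theory Num.Theory.
Import numFieldNormedType.Exports.
Local Open Scope ring_scope.

Definition dotv (R : realType) (d : nat) (u v : 'rV[R]_d) : R :=
  \sum_(j < d) u ord0 j * v ord0 j.

Definition sqn (R : realType) (d : nat) (u : 'rV[R]_d) : R := dotv u u.

Definition enorm (R : realType) (d : nat) (u : 'rV[R]_d) : R := Num.sqrt (sqn u).

Definition convex_fun (R : realType) (d : nat) (f : 'rV[R]_d -> R) : Prop :=
  forall (x y : 'rV[R]_d) (t : R), 0 <= t -> t <= 1 ->
    f (t *: x + (1 - t) *: y) <= t * f x + (1 - t) * f y.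

Definition is_gradient (R : realType) (d : nat)
    (f : 'rV[R]_d -> R^o) (g : 'rV[R]_d -> 'rV[R]_d) : Prop :=
  forall x, differentiable f x /\ forall h, 'd f x h = dotv (g x) h.

Definition lipschitz_with (R : realType) (d : nat) (L : R)
    (g : 'rV[R]_d -> 'rV[R]_d) : Prop :=
  forall x y, enorm (g x - g y) <= L * enorm (x - y).

Definition proper_fun (R : realType) (d : nat) (h : 'rV[R]_d -> \bar R) : Prop :=
  (forall x, h x != -oo%E) /\ (exists x, h x != +oo%E).

Definition is_minimizer (R : realType) (d : nat) (h : 'rV[R]_d -> \bar R)
    (y : 'rV[R]_d) : Prop := forall w, (h y <= h w)%E.

(* y \in prox_{gam h}(z) = argmin_w { h w + 1/(2 gam) ||w - z||^2 } *)
Definition in_prox (R : realType) (d : nat) (gam : R) (h : 'rV[R]_d -> \bar R)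
    (z y : 'rV[R]_d) : Prop :=
  is_minimizer (fun w => (h w + ((2 * gam)^-1 * sqn (w - z))%:E)%E) y.

Definition ext (R : realType) (d : nat) (f : 'rV[R]_d -> R) : 'rV[R]_d -> \bar R :=
  fun x => (f x)%:E.

Definition ryu_seq (R : realType) (d : nat)
    (f1 f2 : 'rV[R]_d -> R) (f3 : 'rV[R]_d -> \bar R) (alpha gam lam : R)
    (x1 x2 x3 z1 z2 : nat -> 'rV[R]_d) : Prop :=
  forall k,
    [/\ in_prox gam (ext f1) (z1 k) (x1 k),
        in_prox (gam / alpha) (ext f2) (alpha^-1 *: z2 k + x1 k) (x2 k),
        in_prox gam f3 (x1 k - z1 k + x2 k - z2 k) (x3 k),
        z1 k.+1 = z1 k + lam *: (x3 k - x1 k) &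
        z2 k.+1 = z2 k + lam *: (x3 k - x2 k)].

From HB Require Import structures.
From mathcomp Require Import all_boot all_order all_algebra.
From mathcomp Require Import all_classical all_reals all_analysis.
From mathcomp Require Import ring lra.
Import Order.TTheory GRing.Theory Num.Theory.
Import numFieldNormedType.Exports.
Local Open Scope ring_scope.
Set Implicit Arguments. Unset Strict Implicit. Unset Printing Implicit Defensive.

(* By Fermat's rule the prox steps read z1 = x1 + gam g1(x1) and
   z2 = alpha (x2 - x1) + gam g2(x2), so the z-updates express x3 - x1^k and
   x3 - x2^k linearly in the increments of x1, x2 and of the gradients.  Each
   bracket on the left equals
     f(x^k) - f(x^{k+1}) - <g(x^{k+1}), x^k - x^{k+1}> - <dg, x3 - x^k>,
   and the first three terms are at least |dg|^2 / (2L) by cocoercivity of the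
   gradient of a convex L-smooth function (descent lemma + gradient inequality). *)

Section InnerProduct.
Variables (R : realType) (d : nat).
Implicit Types (u v w : 'rV[R]_d) (k r : R).

Lemma dotvC u v : dotv u v = dotv v u.
Proof. by apply: eq_bigr => i _; rewrite mulrC. Qed.

Lemma dotvDl u v w : dotv (u + v) w = dotv u w + dotv v w.
Proof. by rewrite /dotv -big_split; apply: eq_bigr => i _; rewrite !mxE mulrDl. Qed.

Lemma dotvNl u w : dotv (- u) w = - dotv u w.
Proof. by rewrite /dotv -sumrN; apply: eq_bigr => i _; rewrite !mxE mulNr. Qed.

Lemma dotvZl k u w : dotv (k *: u) w = k * dotv u w.
Proof. by rewrite /dotv mulr_sumr; apply: eq_bigr => i _; rewrite !mxE mulrA. Qed.

Lemma dotvBl u v w : dotv (u - v) w = dotv u w - dotv v w.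
Proof. by rewrite dotvDl dotvNl. Qed.

Lemma dotvDr u v w : dotv w (u + v) = dotv w u + dotv w v.
Proof. by rewrite !(dotvC w) dotvDl. Qed.

Lemma dotvBr u v w : dotv w (u - v) = dotv w u - dotv w v.
Proof. by rewrite !(dotvC w) dotvBl. Qed.

Lemma dotvZr k u w : dotv w (k *: u) = k * dotv w u.
Proof. by rewrite !(dotvC w) dotvZl. Qed.

Lemma sqn_ge0 u : 0 <= sqn u.
Proof. by apply: sumr_ge0 => i _; rewrite -expr2 sqr_ge0. Qed.

Lemma sqn_eq0 u : (sqn u == 0) = (u == 0).
Proof.
apply/idP/eqP => [/eqP u0|->]; last by rewrite /sqn /dotv big1 // => i _; rewrite mxE mul0r.
have /psumr_eq0P u2_0 : \sum_(i < d) u ord0 i ^+ 2 = 0 by [].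
apply/rowP => j; apply/eqP; rewrite mxE -sqrf_eq0 u2_0 // => i _; exact: sqr_ge0.
Qed.

Lemma sqnN u : sqn (- u) = sqn u.
Proof. by rewrite /sqn dotvNl dotvC dotvNl opprK. Qed.

Lemma sqnZ k u : sqn (k *: u) = k ^+ 2 * sqn u.
Proof. by rewrite /sqn dotvZl dotvZr mulrA expr2. Qed.

Lemma sqnD u v : sqn (u + v) = sqn u + 2 * dotv u v + sqn v.
Proof. by rewrite /sqn dotvDl !dotvDr (dotvC v u); ring. Qed.

Lemma dotv_le r u v : 0 < r -> sqn u <= r ^+ 2 * sqn v -> dotv u v <= r * sqn v.
Proof.
move=> r0 le_uv; have := sqn_ge0 (u + (- r) *: v).
rewrite sqnD sqnZ dotvZr sqrrN; nra.
Qed.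

Lemma normr_dotv_le r u v :
  0 < r -> sqn u <= r ^+ 2 * sqn v -> `|dotv u v| <= r * sqn v.
Proof.
by move=> r0 le_uv; rewrite ler_norml -lerNl -dotvNl !dotv_le // sqnN.
Qed.

End InnerProduct.

Lemma lipschitz_sqn (R : realType) d (L : R) (g : 'rV[R]_d -> 'rV[R]_d) x y :
  0 <= L -> lipschitz_with L g -> sqn (g x - g y) <= L ^+ 2 * sqn (x - y).
Proof.
move=> L0 /(_ x y); rewrite /enorm => le_g.
have := ler_pM (sqrtr_ge0 _) (sqrtr_ge0 _) le_g le_g.
by rewrite -expr2 sqr_sqrtr ?sqn_ge0 // mulrACA -!expr2 sqr_sqrtr ?sqn_ge0.
Qed.

Lemma le0_of_le_small_multiples (R : realFieldType) (a C : R) :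
  0 <= C -> (forall t, 0 < t -> t <= 1 -> a <= t * C) -> a <= 0.
Proof.
move=> C0 le_aC; rewrite leNgt; apply/negP => a0.
have aC0 : 0 < a + C by lra.
have := le_aC (a / (a + C)) (divr_gt0 a0 aC0).
rewrite ler_pdivrMr // mul1r mulrAC ler_pdivlMr //; nra.
Qed.

Section Gradient.
Variables (R : realType) (d : nat) (f : 'rV[R]_d -> R^o) (g : 'rV[R]_d -> 'rV[R]_d).
Hypothesis fg : is_gradient f g.
Implicit Types (x y z h : 'rV[R]_d) (t : R).

Lemma is_derive_line x h t :
  is_derive t 1 (fun s : R => f (x + s *: h)) (dotv (g (x + t *: h)) h).
Proof.
have [df dfE] := fg (x + t *: h).
pose l := fun s : R => x + s *: h.
have hl : is_diff t l ( *:%R ^~ h).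
  have -> : ( *:%R ^~ h) = (0 : R -> 'rV[R]_d) + ( *:%R ^~ h).
    by apply/funext => s; rewrite /= add0r.
  exact: is_diffD.
have dl : differentiable l t := @ex_diff _ _ _ _ _ _ _ hl.
have dfl : differentiable (f \o l) t by apply: differentiable_comp.
apply: DeriveDef; first exact/diff_derivable.
by rewrite deriveE // diff_comp // diff_val /= scale1r dfE.
Qed.

Lemma in_prox_gradient gam z x :
  in_prox gam (ext f) z x -> g x + gam^-1 *: (x - z) = 0.
Proof.
move=> x_prox; set v := g x + gam^-1 *: (x - z).
suff dotv_v0 h : dotv v h = 0 by apply/eqP; rewrite -sqn_eq0; apply/eqP/dotv_v0.
set a := x - z; set c := (2 * gam)^-1.
(* phi t is the prox objective at x + t h, up to the constant c * sqn a. *)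
pose phi := (fun t : R => f (x + t *: h)) + (2 * c * dotv a h) \*: id
  + (c * sqn h) \*: (id * id).
have dphi t : is_derive t 1 phi
    (dotv (g (x + t *: h)) h + 2 * c * dotv a h + c * sqn h * (t + t)).
  have did := @is_derive_id _ R^o t 1.
  apply: is_derive_eq (is_deriveD (is_deriveD (is_derive_line x h t)
    (is_deriveZ _ did)) (is_deriveZ _ (is_deriveM did did))) _.
  by rewrite /GRing.scale /= !mulr1.
have phiE s : phi s = f (x + s *: h) + 2 * c * dotv a h * s + c * sqn h * (s * s).
  by [].
have phi_min : is_derive (0 : R) 1 phi 0.
  apply: (@derive1_at_min R phi (-1) 1 0) => [|t _||t _].
  - lra.
  - exact: (@ex_derive _ _ _ _ _ _ _ (dphi t)).
  - by rewrite in_itv /= ltrN10 ltr01.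
  have := x_prox (x + t *: h); rewrite /ext -!EFinD lee_fin.
  rewrite -/c [x + _ - z]addrAC (sqnD (x - z)) sqnZ dotvZr !phiE scale0r addr0 -/a.
  lra.
have := @derive_val _ _ _ _ _ _ _ (dphi 0).
rewrite (@derive_val _ _ _ _ _ _ _ phi_min) scale0r addr0 addr0 mulr0 addr0.
rewrite /v dotvDl dotvZl /c invfM mulrA divff ?pnatr_eq0 // mul1r.
by move=> <-.
Qed.

Lemma in_prox_pointE gam z x :
  gam != 0 -> in_prox gam (ext f) z x -> z = x + gam *: g x.
Proof.
move=> gam0 /in_prox_gradient/(congr1 ( *:%R gam)).
by rewrite scalerDr scalerA divff // scale1r scaler0 addrC addrAC => /subr0_eq.
Qed.

Variable L : R.
Hypotheses (L_gt0 : 0 < L) (gL : lipschitz_with L g).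

Lemma descent x h : `|f (x + h) - f x - dotv (g x) h| <= L / 2 * sqn h.
Proof.
suff bound (b : bool) :
    (-1) ^+ b * (f (x + h) - f x - dotv (g x) h) <= L / 2 * sqn h.
  rewrite ler_norml -lerNl -mulN1r (bound true).
  by rewrite -[X in X <= _]mul1r (bound false).
set s := (-1) ^+ b; set D := dotv (g x) h; set S := sqn h.
(* psi' t <= 0 by the Lipschitz bound, and psi 1 - psi 0 is the claim. *)
pose psi := s \*: (fun t : R => f (x + t *: h)) - (s * D) \*: id
  - (L / 2 * S) \*: (id * id).
have psiE t : psi t = s * f (x + t *: h) - s * D * t - L / 2 * S * (t * t).
  by [].
have dpsi t : is_derive t 1 psi
    (s * dotv (g (x + t *: h)) h - s * D - L / 2 * S * (t + t)).
  have did := @is_derive_id _ R^o t 1.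
  have d1 := is_deriveZ s (is_derive_line x h t).
  have d2 := is_deriveB d1 (is_deriveZ (s * D) did).
  have d3 := is_deriveB d2 (is_deriveZ (L / 2 * S) (is_deriveM did did)).
  apply: is_derive_eq d3 _.
  by rewrite /GRing.scale /= !mulr1.
have [c + mvt] := MVT ltr01 (fun t _ => dpsi t)
  (derivable_within_continuous (fun t _ => @ex_derive _ _ _ _ _ _ _ (dpsi t))).
rewrite in_itv /= => /andP[c0 _].
have lip_c : sqn (g (x + c *: h) - g x) <= (L * c) ^+ 2 * S.
  have := lipschitz_sqn (x + c *: h) x (ltW L_gt0) gL.
  by rewrite addrAC subrr add0r sqnZ exprMn mulrA.
have s_lip_c : s * dotv (g (x + c *: h) - g x) h <= L * c * S.
  apply: le_trans (ler_norm _) _; rewrite normrM normr_sign mul1r.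
  exact: normr_dotv_le (mulr_gt0 L_gt0 c0) lip_c.
move: s_lip_c; rewrite dotvBl -/D.
move: mvt; rewrite !psiE scale1r scale0r addr0 subr0 mulr1 !mulr0 mulr1.
lra.
Qed.

Hypothesis f_convex : convex_fun f.

Lemma convex_gradient_le x y : f x + dotv (g x) (y - x) <= f y.
Proof.
set h := y - x.
suff : dotv (g x) h - (f y - f x) <= 0 by lra.
apply: (@le0_of_le_small_multiples _ _ (L / 2 * sqn h)) => [|t t0 t1].
  by rewrite mulr_ge0 ?sqn_ge0 // divr_ge0 ?ltW.
have := f_convex y x (ltW t0) t1.
have -> : t *: y + (1 - t) *: x = x + t *: h.
  by apply/rowP => i; rewrite !mxE; ring.
move=> convex_t.
have := descent x (t *: h); rewrite dotvZr sqnZ ler_norml => /andP[lower _].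
rewrite -(ler_pM2l t0); lra.
Qed.

Lemma cocoercive x y :
  (2 * L)^-1 * sqn (g x - g y) <= f x - f y - dotv (g y) (x - y).
Proof.
(* Compare the value of f at the gradient step x - (g x - g y) / L with the
   lower bound from convexity at y and the upper bound from the descent lemma. *)
set u := g x - g y; set h := (- L^-1) *: u.
have above := convex_gradient_le y (x + h).
have := descent x h; rewrite ler_norml => /andP[_ below].
rewrite [x + h - y]addrAC dotvDr /h !dotvZr in above below.
rewrite sqnZ sqrrN in below.
have L0 : L != 0 by rewrite gt_eqF.
have L2 : L / 2 * L^-1 ^+ 2 = (2 * L)^-1 by field.
have Linv : 2 * (2 * L)^-1 = L^-1 by field.
have gap : L^-1 * dotv (g x) u - L^-1 * dotv (g y) u = 2 * ((2 * L)^-1 * sqn u).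
  by rewrite mulrA Linv -mulrBr -dotvBl.
rewrite mulrA L2 in below; lra.
Qed.

Lemma gradient_step x y c :
  (2 * L)^-1 * sqn (g y - g x) - dotv (g y - g x) (c - x)
    <= f x - f y - dotv (g y) (c - y) + dotv (g x) (c - x).
Proof.
have := cocoercive x y; rewrite -[g x - g y]opprB sqnN.
have -> : c - y = (x - y) + (c - x) by rewrite [RHS]addrC addrA subrK.
by rewrite (dotvDr (x - y)) dotvBl; lra.
Qed.
End Gradient.

Section RyuIterates.
Variables (R : realType) (d : nat) (f1 f2 : 'rV[R]_d -> R^o).
Variables (g1 g2 : 'rV[R]_d -> 'rV[R]_d) (f3 : 'rV[R]_d -> \bar R).
Variables (alpha gam lam : R) (x1 x2 x3 z1 z2 : nat -> 'rV[R]_d).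
Hypotheses (grad1 : is_gradient f1 g1) (grad2 : is_gradient f2 g2).
Hypotheses (alpha_neq0 : alpha != 0) (gam_neq0 : gam != 0) (lam_neq0 : lam != 0).
Hypothesis ryu : ryu_seq f1 f2 f3 alpha gam lam x1 x2 x3 z1 z2.

Lemma ryu_z1E j : z1 j = x1 j + gam *: g1 (x1 j).
Proof. by have [prox1 _ _ _ _] := ryu j; apply: in_prox_pointE prox1. Qed.

Lemma ryu_z2E j : z2 j = alpha *: (x2 j - x1 j) + gam *: g2 (x2 j).
Proof.
have [_ prox2 _ _ _] := ryu j.
have := in_prox_pointE grad2 (mulf_neq0 gam_neq0 (invr_neq0 alpha_neq0)) prox2.
move=> /(congr1 (fun v => alpha *: (v - x1 j))).
rewrite addrK scalerA divff // scale1r => ->.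
by apply/rowP => i; rewrite !mxE; field.
Qed.

Lemma ryu_x3_sub_x1 k :
  x3 k - x1 k = lam^-1 *: (x1 k.+1 - x1 k + gam *: (g1 (x1 k.+1) - g1 (x1 k))).
Proof.
have [_ _ _ z1S _] := ryu k.
apply: (scalerI lam_neq0); rewrite scalerA divff // scale1r.
rewrite -(addKr (z1 k) (lam *: _)) -z1S !ryu_z1E.
by apply/rowP => i; rewrite !mxE; ring.
Qed.

Lemma ryu_x3_sub_x2 k :
  x3 k - x2 k = lam^-1 *: (alpha *: (x2 k.+1 - x2 k - (x1 k.+1 - x1 k))
    + gam *: (g2 (x2 k.+1) - g2 (x2 k))).
Proof.
have [_ _ _ _ z2S] := ryu k.
apply: (scalerI lam_neq0); rewrite scalerA divff // scale1r.
rewrite -(addKr (z2 k) (lam *: _)) -z2S !ryu_z2E.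
by apply/rowP => i; rewrite !mxE; ring.
Qed.

End RyuIterates.

Theorem lemma4 (R : realType) (d : nat)
    (f1 f2 : 'rV[R]_d -> R^o) (g1 g2 : 'rV[R]_d -> 'rV[R]_d)
    (f3 : 'rV[R]_d -> \bar R) (L1 L2 alpha gam lam : R)
    (x1 x2 x3 z1 z2 : nat -> 'rV[R]_d) :
  convex_fun f1 -> convex_fun f2 ->
  is_gradient f1 g1 -> is_gradient f2 g2 ->
  0 < L1 -> 0 < L2 -> lipschitz_with L1 g1 -> lipschitz_with L2 g2 ->
  proper_fun f3 -> lower_semicontinuous f3 ->
  (exists xs, is_minimizer (fun x => ((f1 x + f2 x)%:E + f3 x)%E) xs) ->
  0 < alpha -> 0 < gam -> 0 < lam ->
  ryu_seq f1 f2 f3 alpha gam lam x1 x2 x3 z1 z2 ->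
  forall k : nat,
    let dx1 := x1 k.+1 - x1 k in
    let dx2 := x2 k.+1 - x2 k in
    let dg1 := g1 (x1 k.+1) - g1 (x1 k) in
    let dg2 := g2 (x2 k.+1) - g2 (x2 k) in
    (f1 (x1 k) - f1 (x1 k.+1) - dotv (g1 (x1 k.+1)) (x3 k - x1 k.+1)
       + dotv (g1 (x1 k)) (x3 k - x1 k))
    + (f2 (x2 k) - f2 (x2 k.+1) - dotv (g2 (x2 k.+1)) (x3 k - x2 k.+1)
       + dotv (g2 (x2 k)) (x3 k - x2 k))
    >= ((2 * L1)^-1 - gam / lam) * sqn dg1 + ((2 * L2)^-1 - gam / lam) * sqn dg2
       - lam^-1 * dotv dg1 dx1 - alpha / lam * dotv dg2 dx2
       + alpha / lam * dotv dg2 dx1.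
Proof.
move=> cvx1 cvx2 grad1 grad2 L1_gt0 L2_gt0 lip1 lip2 _ _ _ alpha_gt0 gam_gt0 lam_gt0
  ryu k; cbv zeta.
set dx1 := x1 k.+1 - x1 k; set dx2 := x2 k.+1 - x2 k.
set dg1 := g1 (x1 k.+1) - g1 (x1 k); set dg2 := g2 (x2 k.+1) - g2 (x2 k).
have [alpha0 gam0 lam0] : [/\ alpha != 0, gam != 0 & lam != 0] by rewrite !gt_eqF.
have step1 := gradient_step grad1 L1_gt0 lip1 cvx1 (x1 k) (x1 k.+1) (x3 k).
have step2 := gradient_step grad2 L2_gt0 lip2 cvx2 (x2 k) (x2 k.+1) (x3 k).
have inc1 : dotv dg1 (x3 k - x1 k) = lam^-1 * dotv dg1 dx1 + gam / lam * sqn dg1.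
  by rewrite (ryu_x3_sub_x1 grad1 gam0 lam0 ryu) dotvZr dotvDr dotvZr /sqn; ring.
have inc2 : dotv dg2 (x3 k - x2 k) =
    alpha / lam * dotv dg2 dx2 - alpha / lam * dotv dg2 dx1 + gam / lam * sqn dg2.
  rewrite (ryu_x3_sub_x2 grad2 alpha0 gam0 lam0 ryu) dotvZr dotvDr !dotvZr.
  by rewrite dotvBr /sqn; ring.
rewrite -/dg1 inc1 in step1; rewrite -/dg2 inc2 in step2.
lra.
Qed.
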